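(* For each integer $r\ge 2$, the matrix $A_r$ is $2$-modular.
   Context: An integer matrix $A$ is $\Delta$-modular if the determinant of every $\operatorname{rank}(A)\times\operatorname{rank}(A)$ submatrix has absolute value at most $\Delta$. $D_r$ denotes the $r\times\binom r2$ matrix whose columns are all vectors in $\mathbb{Z}^r$ with exactly two nonzero entries, the first (topmost) equal to $1$ and the second equal to $-1$. $A_r$ is the $r\times(\binom{r+2}{2}-2)$ matrix $[\,I_r\mid D_r\mid B_r\,]$, where $B_r$ is the $r\times(r-1)$ matrix whose first row consists entirely of $1$'s and whose remaining $r-1$ rows form $I_{r-1}$. *)

From HB Require Import structures.
From mathcomp Require Import all_boot all_order all_algebra.
Set Implicit Arguments. Unset Strict Implicit. Unset Printing Implicit Defensive.
Import Order.TTheory GRing.Theory Num.Theory.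
Local Open Scope ring_scope.

Definition int_rank m n (A : 'M[int]_(m, n)) : nat :=
  \rank (map_mx (fun z : int => z%:~R : rat) A).

Definition Delta_modular m n (A : 'M[int]_(m, n)) (Delta : int) : Prop :=
  forall (f : 'I_(int_rank A) -> 'I_m) (g : 'I_(int_rank A) -> 'I_n),
    injective f -> injective g -> `|\det (mxsub f g A)| <= Delta.

Definition Dpairs (r : nat) : {set 'I_r * 'I_r} :=
  [set p : 'I_r * 'I_r | (p.1 < p.2)%N].

Definition Dmx (r : nat) : 'M[int]_(r, #|Dpairs r|) :=
  \matrix_(i < r, k < #|Dpairs r|)
    let p := enum_val k in ((i == p.1)%:R - (i == p.2)%:R).

Definition Bmx (r : nat) : 'M[int]_(r, r.-1) :=
  \matrix_(i < r, j < r.-1)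
    (if (i == 0 :> nat) then 1 else ((i : nat) == j.+1)%:R).

Definition Amx (r : nat) : 'M[int]_(r, r + #|Dpairs r| + r.-1) :=
  row_mx (row_mx 1%:M (Dmx r)) (Bmx r).

From HB Require Import structures.
From mathcomp Require Import all_boot all_order all_algebra.
From mathcomp Require Import ring.
Set Implicit Arguments. Unset Strict Implicit. Unset Printing Implicit Defensive.
Import Order.TTheory GRing.Theory Num.Theory.
Local Open Scope ring_scope.

(* Call a vector an incidence column if its entries have norm at most 1 and
   any two nonzero entries are opposite; for integer vectors these are the
   columns 0, +-e_a and e_a - e_b of incidence matrices of directed graphs.
   A square matrix all of whose columns are incidence columns has
   |det| <= 1: either some column has at most one nonzero entry and we
   expand along it, or every column sums to zero and the matrix is singular.

   The columns of A_r are incidence columns except for those of B_r, which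
   are e_0 + e_(j+1).  Writing the top row of A_r as the difference of the
   top rows of two matrices A_ID (the I_r | D_r part of the top row) and
   A_B (minus the B_r part), both of which have only incidence columns and
   agree with A_r elsewhere, multilinearity of the determinant in the row
   of a square submatrix coming from row 0 gives |det| <= 1 + 1 = 2 for
   every square submatrix of A_r, whatever its size; in particular the rank
   of A_r never needs to be computed, and only r > 0 is used. *)

(* Over an integral domain, a nonempty square matrix whose columns all sum
   to zero is singular: the all-ones row vector lies in its left kernel. *)
Lemma det_col_sums0 (D : idomainType) n (M : 'M[D]_n.+1) :
  (forall j, \sum_i M i j = 0) -> \det M = 0.
Proof.
move=> col_sum0; apply/eqP/det0P; exists (const_mx 1).
  by apply/eqP => /rowP/(_ 0)/eqP; rewrite !mxE oner_eq0.
apply/rowP => j; rewrite !mxE -[RHS](col_sum0 j).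
by apply: eq_bigr => i _; rewrite mxE mul1r.
Qed.

Section IncidenceColumns.

Context {R : numDomainType}.

Definition incidence_col (T : eqType) (w : T -> R) : Prop :=
  (forall x, `|w x| <= 1) /\
  (forall x y, x != y -> w x != 0 -> w y != 0 -> w x + w y = 0).

Definition incidence_cols m n (M : 'M[R]_(m, n)) : Prop :=
  forall j, incidence_col (fun i => M i j).

Lemma incidence_col_comp (T U : eqType) (f : T -> U) (w : U -> R) (w' : T -> R) :
  injective f -> (forall x, w' x = w (f x)) ->
  incidence_col w -> incidence_col w'.
Proof.
move=> f_inj E [w_le1 w_opp]; split=> [x|x y xy]; rewrite !E; first exact: w_le1.
by apply: w_opp; rewrite (inj_eq f_inj).
Qed.

Lemma incidence_col_unit (T : eqType) (a : T) :
  incidence_col (fun x => (x == a)%:R).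
Proof.
split=> [x|x y xy] /=; first by case: (x == a); rewrite ?normr1 ?normr0 ?ler01.
case: (eqVneq x a) => [xa|_]; case: (eqVneq y a) => [ya|_]; rewrite ?eqxx //.
by rewrite xa ya eqxx in xy.
Qed.

Lemma incidence_col_diff (T : eqType) (a b : T) :
  a != b -> incidence_col (fun x => (x == a)%:R - (x == b)%:R).
Proof.
move=> ab; split=> [x|x y xy] /=.
  case: (eqVneq x a) => [->|xa]; first by rewrite (negbTE ab) subr0 normr1.
  by case: (x == b); rewrite ?sub0r ?normrN ?normr1 ?normr0 ?ler01.
have [xa|xa] := eqVneq x a; have [xb|xb] := eqVneq x b;
  have [ya|ya] := eqVneq y a; have [yb|yb] := eqVneq y b => /=;
  rewrite ?subr0 ?sub0r ?subrr ?oppr_eq0 ?eqxx //= => _ _.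
- by rewrite xa ya eqxx in xy.
- exact: addNr.
- by rewrite xb yb eqxx in xy.
Qed.

(* An incidence column with two nonzero entries has zero sum: a third
   nonzero entry would be opposite to both, forcing them to vanish. *)
Lemma incidence_col_sum0 (T : finType) (w : T -> R) (j k : T) :
  incidence_col w -> j != k -> w j != 0 -> w k != 0 -> \sum_x w x = 0.
Proof.
move=> [_ w_opp] jk wj wk.
rewrite (bigD1 j) // (bigD1 k) 1?eq_sym //= big1 ?addr0; first exact: w_opp.
move=> l /andP[lj lk]; have [//|wl] := eqVneq (w l) 0.
have two_wj : w j *+ 2 = (w j + w k) + (w l + w j) - (w l + w k) by ring.
rewrite (w_opp j k) // (w_opp l j) // (w_opp l k) // addr0 subr0 in two_wj.
by move/eqP: two_wj; rewrite mulrn_eq0 /= (negbTE wj).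
Qed.

Lemma incidence_cols_mxsub m n k l (f : 'I_k -> 'I_m) (g : 'I_l -> 'I_n)
    (M : 'M[R]_(m, n)) :
  injective f -> incidence_cols M -> incidence_cols (mxsub f g M).
Proof.
move=> f_inj M_inc j.
by apply: incidence_col_comp f_inj _ (M_inc (g j)) => i; rewrite mxE.
Qed.

Lemma incidence_cols_row_mx m n1 n2 (M1 : 'M[R]_(m, n1)) (M2 : 'M[R]_(m, n2)) :
  incidence_cols M1 -> incidence_cols M2 -> incidence_cols (row_mx M1 M2).
Proof.
move=> M1_inc M2_inc j; case: (split_ordP j) => k ->.
  by apply: incidence_col_comp (@inj_id _) _ (M1_inc k) => i; rewrite row_mxEl.
by apply: incidence_col_comp (@inj_id _) _ (M2_inc k) => i; rewrite row_mxEr.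
Qed.

Lemma incidence_cols_1 n : incidence_cols (1%:M : 'M[R]_n).
Proof.
move=> j.
apply: incidence_col_comp (@inj_id _) _ (incidence_col_unit j) => i.
by rewrite mxE.
Qed.

Definition clear_row m n (i0 : 'I_m) (M : 'M[R]_(m, n)) : 'M[R]_(m, n) :=
  \matrix_(i, j) if i == i0 then 0 else M i j.

Lemma incidence_cols_clear_row m n (i0 : 'I_m) (M : 'M[R]_(m, n)) :
  incidence_cols M -> incidence_cols (clear_row i0 M).
Proof.
move=> M_inc j; have [M_le1 M_opp] := M_inc j.
split=> [x|x y xy]; rewrite !mxE; first by case: ifP; rewrite ?normr0 ?ler01.
by case: ifP; case: ifP; rewrite ?eqxx //= => _ _; exact: M_opp.
Qed.

(* Incidence matrices are unimodular in the weak sense |det| <= 1.  If some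
   column has at most one nonzero entry, expand along it and recurse on the
   minor; otherwise every column has two nonzero entries, hence sums to 0. *)
Lemma det_incidence_le1 n (M : 'M[R]_n) : incidence_cols M -> `|\det M| <= 1.
Proof.
elim: n M => [|n IH] M M_inc; first by rewrite det_mx00 normr1.
have [/existsP[c /existsP[i /forallP single]] | no_single] :=
  boolP [exists c, exists i, [forall i', (i' != i) ==> (M i' c == 0)]].
  rewrite (expand_det_col _ c) (bigD1 i) //= big1 ?addr0 => [|i' i'i]; last first.
    by rewrite (eqP (implyP (single i') i'i)) mul0r.
  rewrite /cofactor !normrM normr_sign mul1r mulr_ile1 //.
    by case: (M_inc c).
  apply: IH => c'.
  apply: incidence_col_comp (@lift_inj _ i) _ (M_inc (lift c c')) => i'.
  by rewrite !mxE.
suff -> : \det M = 0 by rewrite normr0 ler01.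
apply: det_col_sums0 => c.
have other_nonzero i : exists2 i', i' != i & M i' c != 0.
  move: no_single; rewrite negb_exists => /forallP/(_ c).
  rewrite negb_exists => /forallP/(_ i); rewrite negb_forall => /existsP[i'].
  by rewrite negb_imply => /andP[]; exists i'.
have [j _ Mj] := other_nonzero ord0; have [k kj Mk] := other_nonzero j.
by apply: incidence_col_sum0 (M_inc c) _ Mj Mk; rewrite eq_sym.
Qed.

(* The splitting argument: if A agrees with P and Q outside row i0, its row
   i0 is the difference of theirs, and P, Q have incidence columns, then every
   square submatrix of A (rows chosen injectively) has |det| <= 2.  When row
   i0 is selected, multilinearity in that row gives det = det P' - det Q' for
   the corresponding submatrices P', Q'; otherwise the submatrix is one of P. *)
Lemma det_submx_le2 m n (A P Q : 'M[R]_(m, n)) (i0 : 'I_m) :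
  incidence_cols P -> incidence_cols Q ->
  (forall i j, i != i0 -> P i j = A i j) ->
  (forall i j, i != i0 -> Q i j = A i j) ->
  (forall j, A i0 j = P i0 j - Q i0 j) ->
  forall k (f : 'I_k -> 'I_m) (g : 'I_k -> 'I_n),
    injective f -> `|\det (mxsub f g A)| <= 2.
Proof.
move=> P_inc Q_inc PA QA A_i0 k f g f_inj.
have det_le1 (M : 'M[R]_(m, n)) : incidence_cols M -> `|\det (mxsub f g M)| <= 1.
  by move=> M_inc; apply/det_incidence_le1/incidence_cols_mxsub.
have [v /eqP fv | i0_unused] := pickP (fun v => f v == i0).
  have outside_v (M : 'M[R]_(m, n)) : (forall i j, i != i0 -> M i j = A i j) ->
      row' v (mxsub f g M) = row' v (mxsub f g A).
    move=> MA; apply/matrixP => i j; rewrite !mxE MA // -fv (inj_eq f_inj).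
    by rewrite eq_sym neq_lift.
  rewrite (@determinant_multilinear _ _ _ (mxsub f g P) (mxsub f g Q) v 1 (-1)).
  - by rewrite mul1r mulN1r (le_trans (ler_normB _ _)) // lerD ?det_le1.
  - by apply/rowP => j; rewrite !mxE fv A_i0 mul1r mulN1r.
  - exact: outside_v.
  - exact: outside_v.
have -> : mxsub f g A = mxsub f g P.
  by apply/matrixP => i j; rewrite !mxE PA // i0_unused.
by rewrite (le_trans (det_le1 _ P_inc)) // ler1n.
Qed.

End IncidenceColumns.

(* From here on A_r has r.+1 rows, indexed from the top row 0; its B_r block
   has r columns, column j being e_0 + e_(j+1), with j+1 = lift ord0 j. *)

Lemma incidence_cols_Dmx r : incidence_cols (Dmx r).
Proof.
move=> k; have := enum_valP k; rewrite inE => ordered.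
have distinct : (enum_val k).1 != (enum_val k).2.
  by rewrite -val_eqE neq_ltn ordered.
apply: incidence_col_comp (@inj_id _) _ (incidence_col_diff distinct) => i.
by rewrite mxE.
Qed.

Lemma Bmx_below_top r (i : 'I_r.+1) (j : 'I_r) :
  i != ord0 -> Bmx r.+1 i j = (i == lift ord0 j)%:R.
Proof. by move=> i_pos; rewrite mxE ifN // -val_eqE /= lift0. Qed.

Definition Bunit r : 'M[int]_(r.+1, r) := \matrix_(i, j) (i == lift ord0 j)%:R.

Definition Bdiff r : 'M[int]_(r.+1, r) :=
  \matrix_(i, j) ((i == lift ord0 j)%:R - (i == ord0)%:R).

(* The two matrices whose top rows differ by the top row of A_r and which
   agree with A_r elsewhere: A_ID keeps the I_r | D_r part of the top row,
   A_B carries minus the B_r part. *)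
Definition A_ID r : 'M[int]_(r.+1, r.+1 + #|Dpairs r.+1| + r) :=
  row_mx (row_mx 1%:M (Dmx r.+1)) (Bunit r).

Definition A_B r : 'M[int]_(r.+1, r.+1 + #|Dpairs r.+1| + r) :=
  row_mx (clear_row ord0 (row_mx 1%:M (Dmx r.+1))) (Bdiff r).

Lemma incidence_cols_A_ID r : incidence_cols (A_ID r).
Proof.
apply: incidence_cols_row_mx.
  exact/incidence_cols_row_mx/incidence_cols_Dmx/incidence_cols_1.
move=> j.
apply: incidence_col_comp (@inj_id _) _ (incidence_col_unit (lift ord0 j)) => i.
by rewrite mxE.
Qed.

Lemma incidence_cols_A_B r : incidence_cols (A_B r).
Proof.
apply: incidence_cols_row_mx.
  apply/incidence_cols_clear_row.
  exact/incidence_cols_row_mx/incidence_cols_Dmx/incidence_cols_1.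
move=> j; have distinct : lift ord0 j != ord0 by rewrite eq_sym neq_lift.
apply: incidence_col_comp (@inj_id _) _ (incidence_col_diff distinct) => i.
by rewrite mxE.
Qed.

Lemma A_ID_below_top r i j : i != ord0 -> A_ID r i j = Amx r.+1 i j.
Proof.
move=> i_pos; rewrite /A_ID /Amx; case: (split_ordP j) => k ->.
  by rewrite !row_mxEl.
by rewrite !row_mxEr Bmx_below_top // mxE.
Qed.

Lemma A_B_below_top r i j : i != ord0 -> A_B r i j = Amx r.+1 i j.
Proof.
move=> i_pos; rewrite /A_B /Amx; case: (split_ordP j) => k ->.
  by rewrite !row_mxEl mxE (negbTE i_pos).
by rewrite !row_mxEr Bmx_below_top // mxE (negbTE i_pos) subr0.
Qed.

Lemma Amx_top_row r j : Amx r.+1 ord0 j = A_ID r ord0 j - A_B r ord0 j.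
Proof.
rewrite /A_ID /A_B /Amx; case: (split_ordP j) => k ->.
  by rewrite !row_mxEl [clear_row _ _ _ _]mxE eqxx subr0.
by rewrite !row_mxEr !mxE eqxx (negbTE (neq_lift ord0 k)) /= !sub0r opprK.
Qed.

Theorem lemma3p1 (r : nat) (hr : (2 <= r)%N) : Delta_modular (Amx r) 2.
Proof.
case: r hr => [//|r _] f g f_inj _.
apply: (@det_submx_le2 _ _ _ (Amx r.+1) (A_ID r) (A_B r) ord0) f_inj.
- exact: incidence_cols_A_ID.
- exact: incidence_cols_A_B.
- exact: A_ID_below_top.
- exact: A_B_below_top.
- exact: Amx_top_row.
Qed.
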